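(* Let $C:\mathbb{R}^n\to\mathbb{R}$ be convex, increasing and $\mathbf 1$-invariant. Then $\varphi:\mathbb{R}^n\to\mathbb{R}$, $\varphi(\vec q)=-C(-\vec q)$, is concave and increasing. Furthermore $\mathsf{ValTrades}_\varphi=\mathsf{ValTrades}'_C$, i.e. for every nonempty history $h$, \[\{\vec r\in\mathbb{R}^n\mid\varphi(\vec q_h+\vec r)=\varphi(\vec q_h)\}=\{\vec r+\alpha\mathbf 1\mid \vec r\in\mathbb{R}^n,\ \alpha=C(-\vec q_h-\vec r)-C(-\vec q_h)\}.\]
   Context: $\mathbf 1=(1,\dots,1)\in\mathbb{R}^n$. $C$ is $\mathbf 1$-invariant if $C(\vec q+\alpha\mathbf 1)=C(\vec q)+\alpha$ for all $\vec q,\alpha$; a function is increasing if $f(\vec q)>f(\vec q')$ whenever $\vec q\succeq\vec q'$ coordinatewise and $\vec q\neq\vec q'$. A history $h$ is a finite list of vectors in $\mathbb{R}^n$ and $\vec q_h$ is their sum. $\mathsf{ValTrades}_\varphi(h)=\{\vec r\mid\varphi(\vec q_h+\vec r)=\varphi(\vec q_h)\}$ is the constant-function market maker (CFMM) for potential $\varphi$, and $\mathsf{ValTrades}'_C(h)=\{\vec r+\alpha\mathbf 1\mid\vec r\in\mathbb{R}^n,\ \alpha=C(-\vec q_h-\vec r)-C(-\vec q_h)\}$ is the cashless cost-function market maker for $C$. *)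

From HB Require Import structures.
From mathcomp Require Import all_boot all_order all_algebra.
From mathcomp Require Import classical_sets reals.
Set Implicit Arguments. Unset Strict Implicit. Unset Printing Implicit Defensive.
Import Order.TTheory GRing.Theory Num.Theory.
Local Open Scope ring_scope.
Local Open Scope classical_set_scope.

Section Defs.
Variables (R : realType) (n : nat).
Notation vec := 'rV[R]_n.

Definition ones : vec := const_mx 1.

Definition vge (q q' : vec) : Prop := forall i, q' ord0 i <= q ord0 i.

Definition convex_fun (f : vec -> R) : Prop :=
  forall (x y : vec) (t : R), 0 <= t -> t <= 1 ->
    f (t *: x + (1 - t) *: y) <= t * f x + (1 - t) * f y.

Definition concave_fun (f : vec -> R) : Prop :=
  forall (x y : vec) (t : R), 0 <= t -> t <= 1 ->
    t * f x + (1 - t) * f y <= f (t *: x + (1 - t) *: y).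

Definition increasing_fun (f : vec -> R) : Prop :=
  forall q q' : vec, vge q q' -> q <> q' -> f q' < f q.

Definition one_invariant (C : vec -> R) : Prop :=
  forall (q : vec) (a : R), C (q + a *: ones) = C q + a.

Definition qh (h : seq vec) : vec := \sum_(v <- h) v.

Definition ValTrades (phi : vec -> R) (h : seq vec) : set vec :=
  [set r | phi (qh h + r) = phi (qh h)].

Definition ValTrades' (C : vec -> R) (h : seq vec) : set vec :=
  [set s | exists (r : vec) (a : R),
      a = C (- qh h - r) - C (- qh h) /\ s = r + a *: ones].

End Defs.

From HB Require Import structures.
From mathcomp Require Import all_boot all_order all_algebra.
From mathcomp Require Import classical_sets reals.
From mathcomp Require Import lra.
Import Order.TTheory GRing.Theory Num.Theory.
Local Open Scope ring_scope.
Local Open Scope classical_set_scope.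

(* Reflecting q to -q and negating the value turns convexity into concavity
   and preserves monotonicity.  On the trading side, phi (q_h + r) = phi q_h is
   C (-q_h - r) = C (-q_h), so a CFMM trade is a cost-function trade with
   alpha = 0; conversely, 1-invariance absorbs the cash alpha 1 paid for r, so
   that C (-q_h - (r + alpha 1)) = C (-q_h). *)

Section CostPotential.
Variables (R : realType) (n : nat).
Notation vec := 'rV[R]_n.
Implicit Types (C : vec -> R) (h : seq vec).

Definition potential_of_cost C (q : vec) : R := - C (- q).

Lemma concave_potential_of_cost C :
  convex_fun C -> concave_fun (potential_of_cost C).
Proof.
move=> convexC x y t t_ge0 t_le1; rewrite /potential_of_cost.
have -> : - (t *: x + (1 - t) *: y) = t *: (- x) + (1 - t) *: (- y).
  by rewrite opprD -!scalerN.
have := convexC (- x) (- y) t t_ge0 t_le1.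
rewrite !mulrN; lra.
Qed.

Lemma increasing_potential_of_cost C :
  increasing_fun C -> increasing_fun (potential_of_cost C).
Proof.
move=> incrC q q' q_ge_q' q_neq_q'; rewrite /potential_of_cost ltrN2.
apply: incrC => [i|/oppr_inj/esym//].
by rewrite !mxE lerN2.
Qed.

Lemma ValTrades_potential_sub C h :
  ValTrades (potential_of_cost C) h `<=` ValTrades' C h.
Proof.
move=> r /oppr_inj; rewrite opprD => C_eq.
exists r, 0; split; last by rewrite scale0r addr0.
by rewrite C_eq subrr.
Qed.

Lemma ValTrades'_sub_potential C h :
  one_invariant C -> ValTrades' C h `<=` ValTrades (potential_of_cost C) h.
Proof.
move=> invC _ [r [a [-> ->]]]; rewrite /ValTrades /potential_of_cost /=.
congr (- _).
set alpha := C (- qh h - r) - C (- qh h).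
have -> : - (qh h + (r + alpha *: ones R n)) = (- qh h - r) + (- alpha) *: ones R n.
  by rewrite scaleNr !opprD addrA.
rewrite invC /alpha; lra.
Qed.

End CostPotential.

Theorem theorem3p3 (R : realType) (n : nat) (C : 'rV[R]_n -> R) :
  convex_fun C -> increasing_fun C -> one_invariant C ->
  let phi := fun q : 'rV[R]_n => - C (- q) in
  [/\ concave_fun phi, increasing_fun phi &
      forall h : seq 'rV[R]_n, h <> [::] -> ValTrades phi h = ValTrades' C h].
Proof.
move=> convexC incrC invC phi; split.
- exact: concave_potential_of_cost.
- exact: increasing_potential_of_cost.
-
  move=> h _; apply/seteqP; split.
  + exact: ValTrades_potential_sub.
  + exact: ValTrades'_sub_potential.
Qed.
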